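(* Define $U:[0,\infty)\to\mathbb{R}$ by $U(r)=\lim_{n\to\infty}u_n(r)$ where $u_0(r)=r$, $u_1(r)=\sqrt{1+r^2}$, $u_2(r)=\sqrt{1+\sqrt{1+r^4}}$, and in general $u_n(r)=\sqrt{1+\sqrt{1+\dots+\sqrt{1+r^{2^n}}}}$ ($n$ nested roots). For real numbers $s>r\ge1$, $U(s)>U(r)$.
   Context: The limit defining $U(r)$ exists for every $r\ge0$ (this is the transfinite radical $\kappa_i([i<\omega]+r[i=\omega])$). *)

From Stdlib Require Import Reals.
From Coquelicot Require Import Coquelicot.
Open Scope R_scope.

Definition u (n : nat) (r : R) : R :=
  Nat.iter n (fun y => sqrt (1 + y)) (r ^ (2 ^ n)).

(* U(r) = lim_{n -> oo} u_n(r) (the limit exists for r >= 0). *)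
Definition U (r : R) : R := real (Lim_seq (fun n => u n r)).

(** The sequence [u n r] increases to [U r], and peeling off the outer [n] roots gives
    [u (n + k) r = nest n (u k (r ^ 2 ^ n))] with [r ^ 2 ^ n <= u k (r ^ 2 ^ n) <= r ^ 2 ^ n + 1].
    Hence [U r <= nest n (r ^ 2 ^ n + 1)] while [nest n (s ^ 2 ^ n) = u n s <= U s].
    Since [s ^ 2 ^ n - r ^ 2 ^ n >= 2 ^ n (s - r)] exceeds [1] for large [n], and
    [nest n] is strictly increasing, [U r < U s]. *)
From Stdlib Require Import Reals Lra Lia.
From Coquelicot Require Import Coquelicot.
Open Scope R_scope.

Definition nest (n : nat) (x : R) : R := Nat.iter n (fun y => sqrt (1 + y)) x.

Lemma nest_S (n : nat) (x : R) : nest (S n) x = sqrt (1 + nest n x).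
Proof. reflexivity. Qed.

Lemma nest_ge0 (n : nat) (x : R) : 0 <= x -> 0 <= nest n x.
Proof. destruct n; intro Hx; [exact Hx | apply sqrt_pos]. Qed.

Lemma nest_le (n : nat) (x y : R) : 0 <= x -> x <= y -> nest n x <= nest n y.
Proof.
  intros Hx Hxy; induction n as [|n IH]; [exact Hxy |].
  rewrite !nest_S; apply sqrt_le_1_alt; lra.
Qed.

Lemma nest_lt (n : nat) (x y : R) : 0 <= x -> x < y -> nest n x < nest n y.
Proof.
  intros Hx Hxy; induction n as [|n IH]; [exact Hxy |].
  pose proof (nest_ge0 n x Hx).
  rewrite !nest_S; apply sqrt_lt_1_alt; lra.
Qed.

Lemma u_add (n m : nat) (r : R) : u (n + m) r = nest n (u m (r ^ 2 ^ n)).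
Proof.
  unfold u, nest; rewrite Nat.iter_add, Nat.pow_add_r, pow_mult; reflexivity.
Qed.

Lemma u_S (k : nat) (r : R) : u (S k) r = sqrt (1 + u k (r ^ 2)).
Proof. exact (u_add 1 k r). Qed.

Lemma u_le_S (k : nat) (r : R) : u k r <= u (S k) r.
Proof.
  revert r; induction k as [|k IH]; intro r.
  - rewrite u_S; unfold u; simpl; rewrite !Rmult_1_r.
    destruct (Rle_or_lt 0 r) as [Hr | Hr].
    + rewrite <- (sqrt_pow2 r Hr) at 1; apply sqrt_le_1_alt; simpl; lra.
    + pose proof (sqrt_pos (1 + r * r)); lra.
  - rewrite (u_S (S k)), (u_S k); apply sqrt_le_1_alt.
    specialize (IH (r ^ 2)); lra.
Qed.

Lemma u_le_add (n k : nat) (r : R) : u k r <= u (n + k) r.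
Proof.
  induction n as [|n IH]; [apply Rle_refl |].
  eapply Rle_trans; [exact IH | apply u_le_S].
Qed.

Lemma u_ge (k : nat) (r : R) : r <= u k r.
Proof.
  pose proof (u_le_add k 0 r) as H; rewrite Nat.add_0_r in H.
  unfold u at 1 in H; simpl in H; lra.
Qed.

Lemma u_le_add1 (k : nat) (r : R) : 1 <= r -> u k r <= r + 1.
Proof.
  revert r; induction k as [|k IH]; intros r Hr.
  - unfold u; simpl; lra.
  - rewrite u_S, <- (sqrt_pow2 (r + 1)) by lra.
    apply sqrt_le_1_alt.
    assert (IHr : u k (r ^ 2) <= r ^ 2 + 1) by (apply IH; nra).
    nra.
Qed.

Lemma is_lim_seq_u (r : R) : 1 <= r -> is_lim_seq (fun n => u n r) (U r).
Proof.
  intro Hr.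
  destruct (ex_finite_lim_seq_incr (fun n => u n r) (r + 1)) as [l Hl].
  - intro n; apply u_le_S.
  - intro n; now apply u_le_add1.
  - unfold U; rewrite (is_lim_seq_unique _ _ Hl); exact Hl.
Qed.

Lemma u_le_U (n : nat) (r : R) : 1 <= r -> u n r <= U r.
Proof.
  intro Hr; apply (is_lim_seq_incr_compare (fun k => u k r)).
  - now apply is_lim_seq_u.
  - intro k; apply u_le_S.
Qed.

Lemma U_le_nest (n : nat) (r : R) : 1 <= r -> U r <= nest n (r ^ 2 ^ n + 1).
Proof.
  intro Hr.
  assert (Hrn : 1 <= r ^ 2 ^ n) by (apply pow_R1_Rle; exact Hr).
  change (Rbar_le (U r) (nest n (r ^ 2 ^ n + 1))).
  apply (is_lim_seq_le (fun k => u k r) (fun _ => nest n (r ^ 2 ^ n + 1))).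
  - intro k; eapply Rle_trans; [apply (u_le_add n k) |].
    rewrite u_add; apply nest_le.
    + pose proof (u_ge k (r ^ 2 ^ n)); lra.
    + now apply u_le_add1.
  - now apply is_lim_seq_u.
  - apply is_lim_seq_const.
Qed.

Lemma pow_sub_ge (m : nat) (r s : R) :
  1 <= r -> r <= s -> INR m * (s - r) <= s ^ m - r ^ m.
Proof.
  intros Hr Hrs; induction m as [|m IH]; [simpl; lra |].
  assert (Hsm : 1 <= s ^ m) by (apply pow_R1_Rle; lra).
  assert (Hrm : 1 <= r ^ m) by (apply pow_R1_Rle; lra).
  assert (Hm : 0 <= INR m) by apply pos_INR.
  assert (0 <= (s - 1) * (s ^ m - r ^ m)) by (apply Rmult_le_pos; nra).
  assert (0 <= (r ^ m - 1) * (s - r)) by (apply Rmult_le_pos; lra).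
  rewrite S_INR; simpl; lra.
Qed.

Lemma pow2_unbounded (x : R) : exists n, x < INR (2 ^ n).
Proof.
  destruct (INR_unbounded x) as [n Hn]; exists n.
  apply Rlt_trans with (INR n); [exact Hn |].
  apply lt_INR, Nat.pow_gt_lin_r; lia.
Qed.

Theorem lemma9 (r s : R) (hr : 1 <= r) (hrs : r < s) : U r < U s.
Proof.
  destruct (pow2_unbounded (/ (s - r))) as [n Hn].
  assert (Hgap : r ^ 2 ^ n + 1 < s ^ 2 ^ n).
  { pose proof (pow_sub_ge (2 ^ n) r s hr (Rlt_le _ _ hrs)) as Hsub.
    assert (1 < INR (2 ^ n) * (s - r)).
    { rewrite <- (Rinv_l (s - r)) by lra.
      apply Rmult_lt_compat_r; lra. }
    lra. }
  assert (Hrn : 1 <= r ^ 2 ^ n) by (apply pow_R1_Rle; exact hr).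
  apply Rle_lt_trans with (nest n (r ^ 2 ^ n + 1)); [now apply U_le_nest |].
  apply Rlt_le_trans with (u n s); [apply nest_lt; lra |].
  apply u_le_U; lra.
Qed.
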